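(* Let $N$ be an NFA with vertex set $V$, let $L_0$ be a backward-admissible initial partition of $V$, and let $\sim$ be an equivalence relation on $V$ refining $\sim_{\mathrm{bwd}(L_0)}$. Let $\bar N$ be the NFA obtained by grouping $N$ by $\sim$. Then $\bar N$ has a conflict if and only if $N$ has a conflict.
   Context: An NFA $N$ over a finite alphabet $A$, with action set $T$ and a relation $\mathrm{conf}\subseteq T\times T$, consists of a finite vertex set $V$, a starting vertex $v_s\in V$, an accepting action set $T_v\subseteq T$ for each $v\in V$, and a set of labeled edges $v\xrightarrow{\lambda}w$ with $v,w\in V$ and $\lambda\in A\cup\{\varepsilon\}$. For $U,W\subseteq T$, $\mathrm{conf}(U,W)$ means $\mathrm{conf}(a,b)$ for some $a\in U,b\in W$. For a vertex $u$ and a finite sequence $\tau=\tau_1\cdots\tau_r$ ($r\ge0$) with $\tau_i\in A\cup\{\varepsilon\}$, a vertex $w$ is reachable from $u$ on $\tau$ if there are vertices $u=v_1,\dots,v_{r+1}=w$ with an edge $v_i\xrightarrow{\tau_i}v_{i+1}$ for each $i$; $w$ is reachable from $u$ on a string $\zeta\in A^*$ if it is reachable on some sequence whose concatenation (reading $\varepsilon$ as the empty string) equals $\zeta$. A conflict in $N$ consists of two (not necessarily distinct) vertices $w,w'$ both reachable from $v_s$ on the same string $\zeta\in A^*$ with $\mathrm{conf}(T_w,T_{w'})$. Given an equivalence relation $\sim$ on $V$, the grouped NFA $\bar N$ has as vertices the equivalence classes, starting vertex the class of $v_s$, action sets $T_{\bar v}=\bigcup_{v\in\bar v}T_v$, and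 an edge $\bar v\xrightarrow{\lambda}\bar w$ iff some $v\in\bar v$, $w\in\bar w$ have an edge $v\xrightarrow{\lambda}w$ in $N$. For a partition $L_0$ of $V$ write $[v]_{L_0}$ for the set of $L_0$ containing $v$; $L_0$ is a backward-admissible initial partition if for all vertices $v_1,v_2$ with $\mathrm{conf}(T_{v_1},T_{v_2})$ and all $v_1'\in[v_1]_{L_0}$, $v_2'\in[v_2]_{L_0}$ that are reachable from $v_s$ on a common string, we have $\mathrm{conf}(T_{v_1'},T_{v_2'})$. Vertices $v_1,v_2$ are backward-equivalent with respect to $L_0$, $v_1\sim_{\mathrm{bwd}(L_0)}v_2$, if for every $Z\in L_0$ and every finite sequence $\tau$ over $A\cup\{\varepsilon\}$, some element of $Z$ is reachable from $v_1$ on $\tau$ iff some element of $Z$ is reachable from $v_2$ on $\tau$. *)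

From mathcomp Require Import all_boot.
Set Implicit Arguments. Unset Strict Implicit. Unset Printing Implicit Defensive.

(* An NFA over alphabet A with action set T: finite vertex type, start vertex,
   accepting action sets (as predicates on T), labelled edges (label None = epsilon). *)
Record NFA (A T : Type) := MkNFA {
  vtx : finType;
  vstart : vtx;
  acts : vtx -> T -> Prop;
  edge : vtx -> option A -> vtx -> Prop
}.
Arguments MkNFA {A T} vtx vstart acts edge.
Arguments vstart {A T} n.
Arguments acts {A T} n _ _.
Arguments edge {A T} n _ _ _.

Section NFADefs.
Variables (A T : Type) (conf : T -> T -> Prop).

Definition confS (U W : T -> Prop) : Prop := exists a b, U a /\ W b /\ conf a b.

Fixpoint reach_seq (N : NFA A T) (u : vtx N) (tau : seq (option A)) (w : vtx N) : Prop :=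
  match tau with
  | [::] => u = w
  | l :: tau' => exists v, edge N u l v /\ @reach_seq N v tau' w
  end.

Definition erase (tau : seq (option A)) : seq A := pmap id tau.

Definition reach_str (N : NFA A T) (u : vtx N) (zeta : seq A) (w : vtx N) : Prop :=
  exists tau, erase tau = zeta /\ reach_seq u tau w.

Definition has_conflict (N : NFA A T) : Prop :=
  exists (w w' : vtx N) (zeta : seq A),
    reach_str (vstart N) zeta w /\ reach_str (vstart N) zeta w' /\
    confS (acts N w) (acts N w').

Definition is_equiv {V : Type} (r : V -> V -> bool) : Prop :=
  (forall x, r x x) /\ (forall x y, r x y -> r y x) /\
  (forall x y z, r x y -> r y z -> r x z).

Section Group.
Variables (N : NFA A T) (sim : rel (vtx N)).

Definition eqcls (v : vtx N) : {set vtx N} := [set w | sim v w].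
Definition is_class (C : {set vtx N}) : bool := [exists v, C == eqcls v].
Definition class_type : finType := {C : {set vtx N} | is_class C}.

Lemma eqcls_is_class (v : vtx N) : is_class (eqcls v).
Proof. by apply/existsP; exists v. Qed.

Definition grouped : NFA A T :=
  MkNFA class_type
    (exist _ (eqcls (vstart N)) (eqcls_is_class (vstart N)))
    (fun C a => exists v, v \in sval C /\ acts N v a)
    (fun C l D => exists v w, v \in sval C /\ w \in sval D /\ edge N v l w).
End Group.

Definition bwd_admissible (N : NFA A T) (L0 : {set {set vtx N}}) : Prop :=
  forall v1 v2 : vtx N, confS (acts N v1) (acts N v2) ->
  forall v1' v2', v1' \in pblock L0 v1 -> v2' \in pblock L0 v2 ->
    (exists zeta, reach_str (vstart N) zeta v1' /\ reach_str (vstart N) zeta v2') ->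
    confS (acts N v1') (acts N v2').

Definition bwd_equiv (N : NFA A T) (L0 : {set {set vtx N}}) (v1 v2 : vtx N) : Prop :=
  forall Z, Z \in L0 -> forall tau : seq (option A),
    (exists2 z, z \in Z & reach_seq v1 tau z) <-> (exists2 z, z \in Z & reach_seq v2 tau z).
End NFADefs.

(* Grouping only adds runs: sending each vertex to its class turns a conflict of N into
   one of the grouped NFA. Conversely, because sim refines backward equivalence, a grouped
   run from a class containing u to a class containing x lifts to a run of N from u into
   the block of x. The two runs of a grouped conflict between v and v' thus give runs of N
   on the same string into the blocks of v and v', and backward admissibility makes their
   endpoints conflict. *)
From mathcomp Require Import all_boot.

Section Grouping.
Variables (A T : Type) (N : NFA A T) (sim : rel (vtx N)).

Definition cls (v : vtx N) : vtx (grouped sim) :=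
  exist _ (eqcls sim v) (eqcls_is_class sim v).

Section Reflexive.
Hypothesis sim_refl : reflexive sim.

Lemma mem_cls (v : vtx N) : v \in sval (cls v).
Proof. by rewrite inE. Qed.

Lemma reach_seq_cls (tau : seq (option A)) (u w : vtx N) :
  reach_seq u tau w -> reach_seq (cls u) tau (cls w).
Proof.
elim: tau u => [|l tau IH] u /=; first by move=> ->.
move=> [v [Huv Hvw]]; exists (cls v); split; last exact: IH.
by exists u, v; rewrite !mem_cls.
Qed.

Lemma reach_str_cls (zeta : seq A) (u w : vtx N) :
  reach_str u zeta w -> reach_str (cls u) zeta (cls w).
Proof. by move=> [tau [Etau Htau]]; exists tau; split; last exact: reach_seq_cls. Qed.

Lemma grouped_conflict_of_conflict (conf : T -> T -> Prop) :
  has_conflict conf N -> has_conflict conf (grouped sim).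
Proof.
move=> [w [w' [zeta [Hw [Hw' [a [b [Ha [Hb Hab]]]]]]]]].
exists (cls w), (cls w'), zeta.
split; [exact: reach_str_cls Hw | split; first exact: reach_str_cls Hw'].
by exists a, b; split; [exists w; rewrite mem_cls | split; [exists w'; rewrite mem_cls |]].
Qed.

End Reflexive.

Section Equivalence.
Hypothesis sim_equiv : is_equiv sim.

Lemma sim_mem_class {C : vtx (grouped sim)} {u v : vtx N} :
  u \in sval C -> v \in sval C -> sim u v.
Proof.
case: sim_equiv => _ [sim_sym sim_trans].
case: C => S /= /existsP [c /eqP ->]; rewrite !inE => Hcu Hcv.
exact: sim_trans (sim_sym _ _ Hcu) Hcv.
Qed.

Variable L0 : {set {set vtx N}}.
Hypothesis sim_bwd : forall v1 v2, sim v1 v2 -> bwd_equiv L0 v1 v2.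

(* The first grouped edge v -> w has v ~ u, and v reaches Z on the whole of tau
   through w, so backward equivalence of u and v with respect to Z transfers this to u. *)
Lemma reach_seq_grouped_block {tau : seq (option A)} {C D : vtx (grouped sim)}
    {Z : {set vtx N}} {u x : vtx N} :
  reach_seq C tau D -> u \in sval C -> x \in sval D -> Z \in L0 -> x \in Z ->
  exists2 z, z \in Z & reach_seq u tau z.
Proof.
elim: tau C u => [|l tau IH] C u /=.
  move=> -> Hu Hx HZ HxZ.
  have [_ from_x] := sim_bwd _ _ (sim_mem_class Hu Hx) Z HZ [::].
  exact: from_x (ex_intro2 _ _ x HxZ erefl).
move=> [E [[v [w [Hv [Hw Hvw]]]] HED]] Hu Hx HZ HxZ.
have [z HzZ Hwz] := IH E w HED Hw Hx HZ HxZ.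
have [from_v _] := sim_bwd _ _ (sim_mem_class Hv Hu) Z HZ (l :: tau).
by apply: from_v; exists z => //=; exists w.
Qed.

Lemma reach_str_grouped_block {zeta : seq A} {C D : vtx (grouped sim)}
    {Z : {set vtx N}} {u x : vtx N} :
  reach_str C zeta D -> u \in sval C -> x \in sval D -> Z \in L0 -> x \in Z ->
  exists2 z, z \in Z & reach_str u zeta z.
Proof.
move=> [tau [Etau Htau]] Hu Hx HZ HxZ.
have [z HzZ Hz] := reach_seq_grouped_block Htau Hu Hx HZ HxZ.
by exists z => //; exists tau.
Qed.

Lemma conflict_of_grouped_conflict (conf : T -> T -> Prop) :
  partition L0 [set: vtx N] -> bwd_admissible conf L0 ->
  has_conflict conf (grouped sim) -> has_conflict conf N.
Proof.
move=> /and3P [/eqP cover_L0 _ _] admissible.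
have block_mem x : pblock L0 x \in L0 by rewrite pblock_mem // cover_L0 inE.
have mem_block x : x \in pblock L0 x by rewrite mem_pblock cover_L0 inE.
have start_mem : vstart N \in sval (vstart (grouped sim)).
  by rewrite inE; case: sim_equiv.
move=> [C [C' [zeta [HC [HC' [a [b [[v [Hv Hva]] [[v' [Hv' Hv'b]] Hab]]]]]]]]].
have [z Hz Hzeta] := reach_str_grouped_block HC start_mem Hv (block_mem v) (mem_block v).
have [z' Hz' Hzeta'] := reach_str_grouped_block HC' start_mem Hv' (block_mem v') (mem_block v').
exists z, z', zeta; split=> //; split=> //.
apply: (admissible v v') Hz Hz' _; first by exists a, b.
by exists zeta.
Qed.

End Equivalence.
End Grouping.

Theorem mainTheorem9 (A : finType) (T : Type) (conf : T -> T -> Prop)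
  (N : NFA A T) (L0 : {set {set vtx N}}) (sim : rel (vtx N)) :
  partition L0 [set: vtx N] ->
  bwd_admissible conf L0 ->
  is_equiv sim ->
  (forall v1 v2, sim v1 v2 -> bwd_equiv L0 v1 v2) ->
  has_conflict conf (grouped sim) <-> has_conflict conf N.
Proof.
move=> partL0 admissible sim_equiv sim_bwd; split.
  exact: conflict_of_grouped_conflict sim_equiv _ sim_bwd _ partL0 admissible.
by apply: grouped_conflict_of_conflict; case: sim_equiv.
Qed.
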